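(* Let $K$ be a field, $S=K[t_1,\ldots,t_s]$, and let $\mathbb{X}$ be a finite subset of the projective space $\mathbb{P}^{s-1}$ over $K$ with $|\mathbb{X}|\geq 2$. Then $\delta_{\mathbb{X}}(d)=\delta_{I(\mathbb{X})}(d)\geq 1$ for all $d\geq 1$.
   Context: $S$ has the standard grading, $S_d$ is its degree $d$ part. $I(\mathbb{X})$ is the vanishing ideal of $\mathbb{X}$: the ideal generated by all homogeneous polynomials vanishing at all points of $\mathbb{X}$. For homogeneous $f$, $V_{\mathbb{X}}(f)$ is the set of points of $\mathbb{X}$ at which $f$ vanishes. $\delta_{\mathbb{X}}(d)$ is the minimum distance of the projective Reed–Muller-type code $C_{\mathbb{X}}(d)$, i.e. $\delta_{\mathbb{X}}(d)=\min\{|\mathbb{X}|-|V_{\mathbb{X}}(f)|: f\in S_d,\ f\notin I(\mathbb{X})\}$ (the minimum number of points of $\mathbb{X}$ at which a degree-$d$ form not vanishing on all of $\mathbb{X}$ is nonzero). For a nonzero graded ideal $I$ with Hilbert function $H_I(d)=\dim_K(S_d/I_d)$ and $k=\dim(S/I)$, $\deg(S/I)=(k-1)!\lim_{d\to\infty}H_I(d)/d^{k-1}$ if $k\geq1$ and $\dim_K(S/I)$ if $k=0$. With $\mathcal{F}_d=\{f\in S_d: f\notin I,\ (I\colon f)\neq I\}$, the minimum distance function is $\delta_I(d)=\deg(S/I)-\max\{\deg(S/(I,f)): f\in\mathcal{F}_d\}$ if $\mathcal{F}_d\neq\emptyset$ and $\delta_I(d)=\deg(S/I)$ otherwise. *)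

From HB Require Import structures.
From mathcomp Require Import all_boot all_order all_algebra.
From mathcomp Require Import mpoly.
From Stdlib Require Import ClassicalEpsilon.

Set Implicit Arguments.
Unset Strict Implicit.
Unset Printing Implicit Defensive.

Import Order.TTheory GRing.Theory Num.Theory.
Local Open Scope ring_scope.

(* If no extremal element exists the value is unspecified; for all    *)
(* uses below the extremum exists (finite / bounded sets).             *)

Definition nat_min (P : nat -> Prop) : nat :=
  epsilon (inhabits 0%N) (fun n => P n /\ forall m, P m -> (n <= m)%N).

Definition nat_max (P : nat -> Prop) : nat :=
  epsilon (inhabits 0%N) (fun n => P n /\ forall m, P m -> (m <= n)%N).

Definition rat_max (P : rat -> Prop) : rat :=
  epsilon (inhabits 0) (fun x => P x /\ forall y, P y -> y <= x).

Definition rat_the (P : rat -> Prop) : rat :=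
  epsilon (inhabits 0) P.

Section Ideals.
Variables (K : fieldType) (s : nat).
Local Notation S := {mpoly K[s]}.

Definition is_ideal (J : S -> Prop) : Prop :=
  [/\ J 0, (forall f g, J f -> J g -> J (f + g)) &
      (forall r f, J f -> J (r * f))].

Definition is_prime_ideal (P : S -> Prop) : Prop :=
  [/\ is_ideal P, ~ P 1 & forall f g, P (f * g) -> P f \/ P g].

Definition ideal_gen (A : S -> Prop) : S -> Prop :=
  fun f => exists r : seq (S * S),
    (forall p, p \in r -> A p.2) /\ f = \sum_(p <- r) p.1 * p.2.

Definition ideal_add (I : S -> Prop) (f : S) : S -> Prop :=
  ideal_gen (fun g => I g \/ g = f).

Definition colon (I : S -> Prop) (f : S) : S -> Prop :=
  fun g => I (g * f).

(* Krull dimension of S/I: the supremum of lengths k of chains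
   P_0 < P_1 < ... < P_k of prime ideals of S containing I. *)
Definition prime_chain (I : S -> Prop) (k : nat) : Prop :=
  exists P : nat -> S -> Prop,
    (forall i, (i <= k)%N -> is_prime_ideal (P i) /\ forall g, I g -> P i g) /\
    (forall i, (i < k)%N ->
       (forall g, P i g -> P i.+1 g) /\ exists g, P i.+1 g /\ ~ P i g).

Definition krull_dim_quot (I : S -> Prop) : nat := nat_max (prime_chain I).

Definition indep_mod (I : S -> Prop) (m : nat) (fs : m.-tuple S) : Prop :=
  forall c : m.-tuple K,
    I (\sum_(i < m) tnth c i *: tnth fs i) -> forall i, tnth c i = 0.

(* Hilbert function H_I(d) = dim_K (S_d / I_d). *)
Definition hilbert_fun (I : S -> Prop) (d : nat) : nat :=
  nat_max (fun m => exists fs : m.-tuple S,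
    (forall i, tnth fs i \is d.-homog) /\ indep_mod I fs).

Definition quot_dim (I : S -> Prop) : nat :=
  nat_max (fun m => exists fs : m.-tuple S, indep_mod I fs).

Definition rat_lim (u : nat -> rat) (L : rat) : Prop :=
  forall eps : rat, 0 < eps ->
    exists N, forall d, (N <= d)%N -> `|u d - L| < eps.

Definition deg_quot (I : S -> Prop) : rat :=
  let k := krull_dim_quot I in
  if k is k'.+1 then
    (k'`!)%:R * rat_the (rat_lim (fun d => (hilbert_fun I d)%:R / (d ^ k')%N%:R))
  else (quot_dim I)%:R.

Definition Fd (I : S -> Prop) (d : nat) (f : S) : Prop :=
  [/\ f \is d.-homog, ~ I f & ~ (forall g, colon I f g <-> I g)].

Definition delta_I (I : S -> Prop) (d : nat) : rat :=
  if excluded_middle_informative (exists f, Fd I d f)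
  then deg_quot I - rat_max (fun x => exists f, Fd I d f /\ x = deg_quot (ideal_add I f))
  else deg_quot I.

(* Points of projective space P^{s-1}: nonzero vectors of K^s up to    *)
(* nonzero scalars.  A finite set X of projective points is given by a *)
(* sequence of representatives of pairwise distinct points.            *)

Definition proj_eq (v w : 'rV[K]_s) : Prop := exists c : K, c != 0 /\ v = c *: w.

Definition proj_set (X : seq 'rV[K]_s) : Prop :=
  (forall v, v \in X -> v != 0) /\
  (forall i j, (i < size X)%N -> (j < size X)%N ->
     proj_eq (nth 0 X i) (nth 0 X j) -> i = j).

Definition ev (v : 'rV[K]_s) (f : S) : K := meval (fun i => v 0 i) f.

Definition vanishing_ideal (X : seq 'rV[K]_s) : S -> Prop :=
  ideal_gen (fun f => (exists e, f \is e.-homog) /\ forall v, v \in X -> ev v f = 0).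

Definition card_zeros (X : seq 'rV[K]_s) (f : S) : nat :=
  count (fun v => ev v f == 0) X.

Definition delta_X (X : seq 'rV[K]_s) (d : nat) : nat :=
  nat_min (fun n => exists f : S,
    [/\ f \is d.-homog, ~ vanishing_ideal X f & n = (size X - card_zeros X f)%N]).

End Ideals.

(* For a point x, the map [on_line x] sending f to f(t x) maps S onto K[t]; its kernel is the
   ideal of the projective point x, and I(X) is the intersection of these kernels.  A prime
   ideal above I(X) contains one of them, and the ideals above such a kernel correspond to the
   ideals of the principal ideal domain K[t]; hence S/I(X) and S/(I(X), f) have Krull
   dimension 1.  Interpolation by forms of large degree shows that their Hilbert functions are
   eventually |X| and |V_X(f)|, which are therefore their degrees.  As F_d consists of the forms
   of degree d vanishing at some but not all points of X, both delta_X(d) and delta_I(d) equal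
   |X| minus the largest |V_X(f)| with f in F_d, and this maximum is smaller than |X|. *)

From HB Require Import structures.
From mathcomp Require Import all_boot all_order all_algebra.
From mathcomp Require Import mpoly ring zify.
From Stdlib Require Import ClassicalEpsilon Classical FunctionalExtensionality PropExtensionality.

Set Implicit Arguments.
Unset Strict Implicit.
Unset Printing Implicit Defensive.

Import Order.TTheory GRing.Theory Num.Theory.
Local Open Scope ring_scope.

Lemma nat_maxE (P : nat -> Prop) n :
  P n -> (forall m, P m -> (m <= n)%N) -> nat_max P = n.
Proof.
move=> Pn maxn; rewrite /nat_max.
have [] := epsilon_spec (inhabits 0%N) (fun k => P k /\ forall m, P m -> (m <= k)%N)
  (ex_intro _ n (conj Pn maxn)).
by move=> Pk maxk; apply/eqP; rewrite eqn_leq maxn // maxk.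
Qed.

Lemma nat_minE (P : nat -> Prop) n :
  P n -> (forall m, P m -> (n <= m)%N) -> nat_min P = n.
Proof.
move=> Pn minn; rewrite /nat_min.
have [] := epsilon_spec (inhabits 0%N) (fun k => P k /\ forall m, P m -> (k <= m)%N)
  (ex_intro _ n (conj Pn minn)).
by move=> Pk mink; apply/eqP; rewrite eqn_leq minn // mink.
Qed.

Lemma rat_maxE (P : rat -> Prop) a :
  P a -> (forall b, P b -> b <= a) -> rat_max P = a.
Proof.
move=> Pa maxa; rewrite /rat_max.
have [] := epsilon_spec (inhabits 0) (fun k => P k /\ forall b, P b -> b <= k)
  (ex_intro _ a (conj Pa maxa)).
by move=> Pk maxk; apply/eqP; rewrite eq_le maxa // maxk.
Qed.

Lemma rat_theE (P : rat -> Prop) a : P a -> (forall b, P b -> b = a) -> rat_the P = a.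
Proof.
move=> Pa uniqa; apply: uniqa.
exact: (epsilon_spec (inhabits 0) P (ex_intro _ a Pa)).
Qed.

Lemma nat_min_exists (P : nat -> Prop) :
  (exists n, P n) -> exists n, P n /\ forall m, P m -> (n <= m)%N.
Proof.
move=> [n Pn]; elim: n {-2}n (leqnn n) Pn => [|N IH] n le_nN Pn.
  by exists n; split=> // m _; move: le_nN; rewrite leqn0 => /eqP ->.
case: (classic (exists m, (m < n)%N /\ P m)) => [[m [lt_mn Pm]]|smaller].
  by apply: (IH m) => //; rewrite -ltnS (leq_trans lt_mn).
exists n; split=> // m Pm; rewrite leqNgt; apply/negP => lt_mn.
by apply: smaller; exists m.
Qed.

Lemma nat_max_exists (P : nat -> Prop) B : (exists n, P n) ->
  (forall n, P n -> (n <= B)%N) -> exists n, P n /\ forall m, P m -> (m <= n)%N.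
Proof.
elim: B => [|B IH] [n Pn] leB.
  by exists n; split=> // m /leB; have := leB _ Pn; lia.
case: (classic (P B.+1)) => [PB|nPB]; first by exists B.+1.
apply: IH; first by exists n.
move=> m Pm; have := leB _ Pm; rewrite leq_eqVlt ltnS => /orP [/eqP eq_mB|//].
by rewrite eq_mB in Pm.
Qed.

Section VanishingIdeal.
Variables (K : fieldType) (s : nat).
Local Notation S := {mpoly K[s]}.

Section Evaluation.
Variable v : 'rV[K]_s.

Lemma evD : {morph ev v : f g / f + g}. Proof. exact: mevalD. Qed.
Lemma evB : {morph ev v : f g / f - g}. Proof. exact: mevalB. Qed.
Lemma evM : {morph ev v : f g / f * g}. Proof. exact: mevalM. Qed.
Lemma evXn (f : S) k : ev v (f ^+ k) = ev v f ^+ k. Proof. exact: rmorphXn. Qed.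
Lemma evZ c (f : S) : ev v (c *: f) = c * ev v f. Proof. exact: mevalZ. Qed.
Lemma evX i : ev v ('X_i : S) = v 0 i. Proof. exact: mevalXU. Qed.
Lemma ev_sum I (r : seq I) (P : pred I) (F : I -> S) :
  ev v (\sum_(i <- r | P i) F i) = \sum_(i <- r | P i) ev v (F i).
Proof. exact: raddf_sum. Qed.

End Evaluation.

Lemma idealB (Q : S -> Prop) f g : is_ideal Q -> Q f -> Q g -> Q (f - g).
Proof. by move=> [_ QD QM] Qf Qg; apply: QD => //; rewrite -mulN1r; apply: QM. Qed.

Lemma ker_prime (R : idomainType) (phi : {rmorphism S -> R}) :
  is_prime_ideal (fun g => phi g = 0).
Proof.
split; first split.
- exact: rmorph0.
- by move=> f g f0 g0; rewrite rmorphD f0 g0 addr0.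
- by move=> r f f0; rewrite rmorphM f0 mulr0.
- by rewrite rmorph1; apply/eqP; rewrite oner_neq0.
- by move=> f g /eqP; rewrite rmorphM mulf_eq0 => /orP [/eqP|/eqP]; [left|right].
Qed.

Lemma ideal_addE (I : S -> Prop) f : is_ideal I ->
  ideal_add I f = fun g => exists a h, I a /\ g = a + h * f.
Proof.
move=> [I0 ID IM]; apply: functional_extensionality => g.
apply: propositional_extensionality; split.
  move=> [r [rIf ->]]; elim: r rIf => [|p r IH] rIf.
    by exists 0, 0; rewrite big_nil mul0r addr0.
  have [a [h [Ia sumE]]] := IH (fun q qr => rIf q (mem_behead (s := p :: r) qr)).
  rewrite big_cons sumE; case: (rIf p (mem_head _ _)) => [Ip|->].
    by exists (p.1 * p.2 + a), h; split; [apply: ID => //; apply: IM|rewrite addrA].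
  by exists a, (p.1 + h); split => //; ring.
move=> [a [h [Ia ->]]]; exists [:: (1, a); (h, f)]; split.
  by move=> p; rewrite !inE => /orP [/eqP ->|/eqP ->]; [left|right].
by rewrite !big_cons big_nil /= mul1r addr0.
Qed.

Lemma dhomogXi i : ('X_i : S) \is 1.-homog.
Proof. by rewrite dhomogX; apply/eqP; exact: mdeg1. Qed.

Section Line.
Variable v : 'rV[K]_s.

Definition on_line : {rmorphism S -> {poly K}} := mmap (@polyC K) (fun i => v 0 i *: 'X).

Lemma on_lineC c : on_line c%:MP = c%:P.
Proof. exact: mmapC. Qed.

Lemma on_line_homog e f : f \is e.-homog -> on_line f = ev v f *: 'X^e.
Proof.
have prodXZ (a : 'I_s -> K) (k : 'I_s -> nat) :
    \prod_(i < s) (a i *: 'X) ^+ k i = (\prod_(i < s) a i ^+ k i) *: 'X^(\sum_(i < s) k i).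
  elim/big_rec3: _ => [|i x y z _ ->]; first by rewrite scale1r.
  by rewrite exprZn -!mul_polyC exprD rmorphM /=; ring.
move=> /dhomogP homf; rewrite /on_line /mmap /ev mevalE scaler_suml.
apply: eq_big_seq => m mf; rewrite /mmap1 prodXZ -mdegE homf //.
by rewrite mul_polyC scalerA.
Qed.

Lemma on_lineX i : on_line 'X_i = v 0 i *: 'X.
Proof. by rewrite (on_line_homog (dhomogXi i)) evX expr1. Qed.

Lemma on_line_homog_eq0 e f : f \is e.-homog -> (on_line f == 0) = (ev v f == 0).
Proof.
by move=> /on_line_homog ->; rewrite scaler_eq0 expf_eq0 polyX_eq0 andbF orbF.
Qed.

Lemma coef_on_line g e : (on_line g)`_e = ev v (pihomog mdeg e g).
Proof.
set k := maxn (mmeasure mdeg g) e.+1.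
have le_gk : (mmeasure mdeg g <= k)%N by rewrite leq_maxl.
have lt_ek : (e < k)%N by rewrite leq_maxr.
rewrite {1}(pihomog_partitionE le_gk) rmorph_sum coef_sum (bigD1 (Ordinal lt_ek)) //=.
rewrite (on_line_homog (pihomogP _ _ _)) coefZ coefXn eqxx mulr1 big1 ?addr0 //.
move=> i /eqP ne_ie; rewrite (on_line_homog (pihomogP _ _ _)) coefZ coefXn.
by case: eqP => [eq_ie|]; [case: ne_ie; apply: val_inj|rewrite mulr0].
Qed.

Hypothesis v_neq0 : v != 0.

Lemma on_line_surj q : exists g, on_line g = q.
Proof.
have [k vk] := rV0Pn _ v_neq0.
have onT : on_line ((v 0 k)^-1%:MP * 'X_k) = 'X.
  by rewrite rmorphM on_lineX on_lineC mul_polyC scalerA mulVf // scale1r.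
exists (\sum_(i < size q) (q`_i)%:MP * ((v 0 k)^-1%:MP * 'X_k) ^+ i).
rewrite rmorph_sum -[RHS]coefK poly_def; apply: eq_bigr => i _.
by rewrite rmorphM rmorphXn onT on_lineC mul_polyC.
Qed.

Section IdealsAboveLine.
Variable Q : S -> Prop.
Hypotheses (Q_ideal : is_ideal Q) (kerQ : forall g, on_line g = 0 -> Q g).

Lemma ideal_on_line_congr g g' : on_line g = on_line g' -> Q g -> Q g'.
Proof.
move=> eq_gg' Qg; have [_ QD _] := Q_ideal.
rewrite -(subrK g g'); apply: QD => //; apply: kerQ.
by rewrite rmorphB eq_gg' subrr.
Qed.

Lemma ideal_on_line_principal : exists p, forall g, Q g <-> p %| on_line g.
Proof.
have [_ _ QM] := Q_ideal.
case: (classic (exists g, Q g /\ on_line g != 0)) => [Qnz|Qz]; last first.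
  exists 0 => g; rewrite dvd0p; split => [Qg|/eqP/kerQ //].
  by apply/eqP; apply: NNPP => /eqP g_neq0; apply: Qz; exists g.
pose P n := exists g, [/\ Q g, on_line g != 0 & size (on_line g) = n].
have [|_ [[g0 [Qg0 g0_neq0 <-]] min_g0]] := @nat_min_exists P.
  by have [g [Qg g_neq0]] := Qnz; exists (size (on_line g)), g.
exists (on_line g0) => g; split => [Qg|dvd_g].
  apply/modp_eq0P/eqP; apply: contraT => rem_neq0.
  have [a ona] := on_line_surj (on_line g %/ on_line g0).
  have onr : on_line (g - a * g0) = on_line g %% on_line g0.
    by rewrite rmorphB rmorphM ona {1}(divp_eq (on_line g) (on_line g0)) addrC addKr.
  have /min_g0 : P (size (on_line (g - a * g0))).
    by exists (g - a * g0); split => //; [exact: idealB Q_ideal Qg (QM _ _ Qg0) | rewrite onr].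
  by rewrite onr leqNgt ltn_modp g0_neq0.
have [a ona] := on_line_surj (on_line g %/ on_line g0).
apply: (ideal_on_line_congr (g := a * g0)); last exact: QM.
by rewrite rmorphM ona divpK.
Qed.

End IdealsAboveLine.

Lemma no_prime_chain2_above_line (Q0 Q1 Q2 : S -> Prop) :
  (forall g, on_line g = 0 -> Q0 g) -> is_prime_ideal Q1 -> is_ideal Q2 -> ~ Q2 1 ->
  (forall g, Q0 g -> Q1 g) -> (forall g, Q1 g -> Q2 g) ->
  (exists g, Q1 g /\ ~ Q0 g) -> (exists g, Q2 g /\ ~ Q1 g) -> False.
Proof.
move=> kerQ0 [Q1_ideal _ Q1_prime] Q2_ideal nQ21 sQ01 sQ12 [g [Q1g nQ0g]] [h [Q2h nQ1h]].
have [p1 Q1E] := ideal_on_line_principal Q1_ideal (fun g g0 => sQ01 _ (kerQ0 _ g0)).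
have [p2 Q2E] := ideal_on_line_principal Q2_ideal (fun g g0 => sQ12 _ (sQ01 _ (kerQ0 _ g0))).
have p1_neq0 : p1 != 0.
  by apply/eqP => p1_0; apply: nQ0g; apply: kerQ0; apply/eqP; rewrite -dvd0p -p1_0; apply/Q1E.
have [w onw] := on_line_surj p1.
have p2_dvd_p1 : p2 %| p1 by rewrite -onw; apply/Q2E/sQ12/Q1E; rewrite onw.
have [t ont] := on_line_surj (p1 %/ p2).
have [u onu] := on_line_surj p2.
have : Q1 (t * u) by apply/Q1E; rewrite rmorphM ont onu divpK.
case/Q1_prime => /Q1E; rewrite ?ont ?onu => p1_dvd.
  have t_neq0 : p1 %/ p2 != 0.
    by apply: contraNneq p1_neq0 => t0; rewrite -(divpK p2_dvd_p1) t0 mul0r.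
  apply: nQ21; apply/Q2E; rewrite rmorph1.
  by rewrite -(@dvdp_mul2l _ (p1 %/ p2)) // divpK // mulr1.
by apply: nQ1h; apply/Q1E; apply: dvdp_trans p1_dvd _; apply/Q2E.
Qed.

End Line.

Definition cone_ideal (X : seq 'rV[K]_s) (g : S) : Prop :=
  forall x, x \in X -> on_line x g = 0.

Lemma cone_ideal_ideal X : is_ideal (cone_ideal X).
Proof.
split.
- by move=> x _; rewrite rmorph0.
- by move=> f g f0 g0 x xX; rewrite rmorphD f0 // g0 // addr0.
- by move=> r f f0 x xX; rewrite rmorphM f0 // mulr0.
Qed.

Lemma vanishing_idealE X : vanishing_ideal X = cone_ideal X.
Proof.
apply: functional_extensionality => g; apply: propositional_extensionality; split.
  move=> [r [r_van ->]] x xX; rewrite rmorph_sum big_seq big1 // => p pr.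
  have [[e home] van] := r_van p pr.
  by rewrite rmorphM (on_line_homog x home) van // scale0r mulr0.
move=> cone_g; exists [seq (1, pihomog mdeg e g) | e <- iota 0 (mmeasure mdeg g)]; split.
  move=> p /mapP [e _ ->] /=; split; first by exists e; apply: pihomogP.
  by move=> x xX; rewrite -coef_on_line cone_g // coef0.
rewrite big_map {1}(pihomog_partitionE (leqnn (mmeasure mdeg g))).
rewrite -(big_mkord xpredT (fun e => pihomog mdeg e g)) /index_iota subn0.
by apply: eq_bigr => e _ /=; rewrite mul1r.
Qed.

Lemma prime_above_cone X (P : S -> Prop) : is_prime_ideal P ->
  (forall g, cone_ideal X g -> P g) -> exists2 x, x \in X & forall g, on_line x g = 0 -> P g.
Proof.
move=> [_ nP1 P_prime]; elim: X => [|x X IH] sXP.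
  by exfalso; apply: nP1; apply: sXP.
case: (classic (forall g, on_line x g = 0 -> P g)) => [kerP|].
  by exists x; rewrite ?mem_head.
move=> not_kerP; have [gx not_imp] := not_all_ex_not _ _ not_kerP.
have [gx0 nPgx] := imply_to_and _ _ not_imp.
have [|y yX kerP] := IH; last by exists y; rewrite // inE yX orbT.
move=> g cone_g; have : P (gx * g).
  apply: sXP => z; rewrite inE rmorphM => /orP [/eqP ->|zX]; first by rewrite gx0 mul0r.
  by rewrite cone_g // mulr0.
by case/P_prime.
Qed.

Lemma prime_chain1_on_line (J : S -> Prop) y : y != 0 ->
  (forall g, J g -> on_line y g = 0) -> prime_chain J 1.
Proof.
move=> y_neq0 sJy.
exists (fun i => if i == 0%N then fun g => on_line y g = 0
                 else fun g => (horner_eval 1 \o on_line y) g = 0); split.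
  move=> [|i] _ /=; first by split; [exact: (ker_prime (on_line y)) | exact: sJy].
  split; first exact: (ker_prime (horner_eval 1 \o on_line y)).
  by move=> g /sJy ->; rewrite horner_evalE horner0.
move=> i; rewrite ltnS leqn0 => /eqP -> /=; split.
  by move=> g ->; rewrite horner_evalE horner0.
have [k yk] := rV0Pn _ y_neq0.
exists ('X_k - (y 0 k)%:MP); rewrite rmorphB on_lineX on_lineC horner_evalE.
split; first by rewrite hornerD hornerN hornerZ hornerX hornerC mulr1 subrr.
move=> /eqP; rewrite subr_eq0 => /eqP /(congr1 (fun p : {poly K} => p`_1)).
by rewrite coefZ coefX coefC mulr1 => yk0; rewrite yk0 eqxx in yk.
Qed.

Lemma krull_dim_quot_eq1 X (J : S -> Prop) y :
  (forall x, x \in X -> x != 0) -> y != 0 ->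
  (forall g, cone_ideal X g -> J g) -> (forall g, J g -> on_line y g = 0) ->
  krull_dim_quot J = 1%N.
Proof.
move=> X_neq0 y_neq0 sXJ sJy; apply: nat_maxE; first exact: prime_chain1_on_line sJy.
move=> m [P [P_prime P_incr]]; rewrite leqNgt; apply/negP => lt1m.
have [P0_prime sJP0] := P_prime 0%N (leq0n _).
have [P1_prime _] := P_prime 1%N (ltnW lt1m).
have [[P2_ideal nP21 _] _] := P_prime 2%N lt1m.
have [x xX kerP0] := prime_above_cone P0_prime (fun g Xg => sJP0 _ (sXJ _ Xg)).
have [s01 e01] := P_incr 0%N (ltnW lt1m).
have [s12 e12] := P_incr 1%N lt1m.
exact: (no_prime_chain2_above_line (X_neq0 x xX) kerP0 P1_prime P2_ideal nP21 s01 s12 e01 e12).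
Qed.

Definition proj_points (Y : seq 'rV[K]_s) : Prop :=
  [/\ uniq Y, forall y, y \in Y -> y != 0 &
      forall y y', y \in Y -> y' \in Y -> y != y' -> ~ proj_eq y y'].

Lemma proj_set_points X : proj_set X -> proj_points X.
Proof.
move=> [X_neq0 X_inj]; split => //.
  apply/(uniqP 0) => i j iX jX eq_ij; apply: X_inj => //.
  by exists 1; rewrite oner_neq0 scale1r eq_ij.
move=> y y' yX y'X /eqP ne_yy' proj_yy'; apply: ne_yy'.
rewrite -(nth_index 0 yX) -(nth_index 0 y'X) in proj_yy' *.
by rewrite (X_inj _ _ _ _ proj_yy') // index_mem.
Qed.

Lemma proj_points_filter Y (P : pred 'rV[K]_s) : proj_points Y -> proj_points (filter P Y).
Proof.
move=> [Y_uniq Y_neq0 Y_sep]; split; first exact: filter_uniq.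
  by move=> y; rewrite mem_filter => /andP [_ /Y_neq0].
by move=> y y'; rewrite !mem_filter => /andP [_ yY] /andP [_ y'Y]; apply: Y_sep.
Qed.

Lemma exists_sep_linear_form (y y' : 'rV[K]_s) : y != 0 -> y' != 0 -> ~ proj_eq y y' ->
  exists2 L : S, L \is 1.-homog & ev y L != 0 /\ ev y' L = 0.
Proof.
move=> y_neq0 y'_neq0 not_prop; have [k y'k] := rV0Pn _ y'_neq0.
have [i cross_i] : exists i, y 0 i * y' 0 k != y 0 k * y' 0 i.
  apply: NNPP => all_cross; apply: not_prop; exists (y 0 k / y' 0 k).
  have cross i : y 0 i * y' 0 k = y 0 k * y' 0 i.
    by apply/eqP; apply: NNPP => /negP ne; apply: all_cross; exists i.
  have yE : y = (y 0 k / y' 0 k) *: y'.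
    by apply/rowP => j; rewrite mxE mulrAC -cross mulfK.
  by split => //; apply: contraNneq y_neq0 => c0; rewrite yE c0 scale0r.
exists (y' 0 k *: 'X_i - y' 0 i *: 'X_k); first by rewrite rpredB // rpredZ // dhomogXi.
rewrite !evB !evZ !evX mulrC [y' 0 i * _]mulrC subr_eq0; split => //.
by rewrite mulrC subrr.
Qed.

Lemma exists_sep_form (y : 'rV[K]_s) (l : seq 'rV[K]_s) D : y != 0 -> (size l <= D)%N ->
  (forall y', y' \in l -> y' != 0 /\ ~ proj_eq y y') ->
  exists2 e : S, e \is D.-homog & ev y e != 0 /\ forall y', y' \in l -> ev y' e = 0.
Proof.
move=> y_neq0; elim: l D => [|y1 l IH] D le_lD sep.
  have [k yk] := rV0Pn _ y_neq0.
  exists ('X_k ^+ D); first by have := dhomogMn D (dhomogXi k); rewrite mul1n.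
  by rewrite evXn evX expf_neq0.
case: D le_lD => // D le_lD.
have sep_l y' : y' \in l -> y' != 0 /\ ~ proj_eq y y'.
  by move=> y'l; apply: sep; rewrite inE y'l orbT.
have [e home [ye le0]] := IH D le_lD sep_l.
have [y1_neq0 sep1] := sep y1 (mem_head _ _).
have [L homL [yL y1L]] := exists_sep_linear_form y_neq0 y1_neq0 sep1.
exists (L * e); first by have := dhomogM homL home; rewrite add1n.
split; first by rewrite evM mulf_neq0.
by move=> y'; rewrite inE evM => /orP [/eqP ->|/le0 ->]; rewrite ?y1L ?mul0r ?mulr0.
Qed.

Lemma exists_interp_form (Y : seq 'rV[K]_s) D (c : 'rV[K]_s -> K) :
  proj_points Y -> (size Y <= D.+1)%N ->
  exists h : S, h \is D.-homog /\ forall y, y \in Y -> ev y h = c y.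
Proof.
elim: Y => [|y l IH] [Y_uniq Y_neq0 Y_sep] le_YD; first by exists 0; rewrite rpred0.
have [y_notin_l l_uniq] := andP Y_uniq.
have l_neq0 y' : y' \in l -> y' != 0 by move=> y'l; apply: Y_neq0; rewrite inE y'l orbT.
have [|h [homh hE]] := IH _ (ltnW le_YD).
  by split => // y1 y2 y1l y2l; apply: Y_sep; rewrite inE ?y1l ?y2l orbT.
have [|e home [ye le0]] := @exists_sep_form y l D (Y_neq0 y (mem_head _ _)) le_YD.
  move=> y' y'l; split; first exact: l_neq0.
  apply: Y_sep; rewrite ?mem_head ?inE ?y'l ?orbT //.
  by apply: contraNneq y_notin_l => ->.
exists (h + ((c y - ev y h) / ev y e) *: e); split; first by rewrite rpredD // rpredZ.
move=> y'; rewrite inE evD evZ => /orP [/eqP ->|y'l].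
  by rewrite divfK // addrC subrK.
by rewrite (le0 y' y'l) mulr0 addr0 hE.
Qed.

Lemma exists_left_kernel_vector m n (A : 'M[K]_(m, n)) : (n < m)%N ->
  exists2 u : 'rV[K]_m, u != 0 & u *m A = 0.
Proof.
move=> lt_nm; apply: NNPP => no_u.
have /eqP rankA : row_free A.
  apply: inj_row_free => u uA; apply/eqP; apply: NNPP => /negP u_neq0.
  by apply: no_u; exists u.
by have := rank_leq_col A; rewrite rankA leqNgt lt_nm.
Qed.

Lemma hilbert_funE (J : S -> Prop) (Y : seq 'rV[K]_s) D :
  proj_points Y -> (size Y <= D.+1)%N ->
  (forall g, J g -> cone_ideal Y g) ->
  (forall g, g \is D.-homog -> (forall y, y \in Y -> ev y g = 0) -> J g) ->
  hilbert_fun J D = size Y.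
Proof.
move=> pY le_YD sJY sYJ; have [Y_uniq _ _] := pY; apply: nat_maxE.
  have [e eP] := fin_all_exists (fun i : 'I_(size Y) =>
    @exists_interp_form Y D (fun y => (y == nth 0 Y i)%:R) pY le_YD).
  exists [tuple e i | i < size Y]; split.
    by move=> i; rewrite tnth_mktuple; case: (eP i).
  move=> c Jc i; have yi : nth 0 Y i \in Y := mem_nth 0 (ltn_ord i).
  set g := \sum_(j < _) _ in Jc.
  have homg : g \is D.-homog.
    by apply: rpred_sum => j _; rewrite tnth_mktuple rpredZ //; case: (eP j).
  move/eqP: (sJY _ Jc _ yi); rewrite (on_line_homog_eq0 _ homg) ev_sum => /eqP.
  rewrite (bigD1 i) //= big1 => [|j ne_ji]; rewrite tnth_mktuple evZ.
    by rewrite (proj2 (eP i)) // eqxx mulr1 addr0.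
  by rewrite (proj2 (eP j)) // nth_uniq // (inj_eq val_inj) eq_sym (negbTE ne_ji) mulr0.
move=> m [fs [homfs indep]]; rewrite leqNgt; apply/negP => lt_Ym.
have [u u_neq0 uA] := exists_left_kernel_vector
  (\matrix_(i < m, j < size Y) ev (nth 0 Y j) (tnth fs i)) lt_Ym.
pose c := [tuple u 0 i | i < m].
have Jc : J (\sum_(i < m) tnth c i *: tnth fs i).
  apply: sYJ; first by apply: rpred_sum => i _; apply/rpredZ/homfs.
  move=> y yY; have yidx : (index y Y < size Y)%N by rewrite index_mem.
  have := congr1 (fun M : 'M_(1, size Y) => M 0 (Ordinal yidx)) uA.
  rewrite !mxE => uA_y; rewrite -[RHS]uA_y ev_sum; apply: eq_bigr => i _.
  by rewrite evZ tnth_mktuple mxE /= nth_index.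
move/negP: u_neq0; apply; apply/eqP/rowP => i.
by have := indep c Jc i; rewrite tnth_mktuple mxE.
Qed.

Lemma rat_the_lim_eventually_const (u : nat -> rat) a N :
  (forall d, (N <= d)%N -> u d = a) -> rat_the (rat_lim u) = a.
Proof.
move=> uE; apply: rat_theE => [eps eps_gt0|b lim_b].
  by exists N => d le_Nd; rewrite uE // subrr normr0.
apply/eqP; apply: contraT => ne_ba.
have := lim_b `|b - a|; rewrite normr_gt0 subr_eq0 ne_ba => /(_ isT) [N1 near_b].
by have := near_b (maxn N N1) (leq_maxr _ _); rewrite uE ?leq_maxl // distrC ltxx.
Qed.

Lemma deg_quotE X (J : S -> Prop) (Y : seq 'rV[K]_s) y D0 :
  proj_points X -> proj_points Y -> y \in Y ->
  (forall g, cone_ideal X g -> J g) -> (forall g, J g -> cone_ideal Y g) ->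
  (forall D g, (D0 <= D)%N -> g \is D.-homog -> (forall y, y \in Y -> ev y g = 0) -> J g) ->
  deg_quot J = (size Y)%:R.
Proof.
move=> [_ X_neq0 _] pY yY sXJ sJY sYJ; have [_ Y_neq0 _] := pY.
have krull : krull_dim_quot J = 1%N.
  by apply: (krull_dim_quot_eq1 X_neq0 (Y_neq0 y yY) sXJ) => g /sJY; apply.
rewrite /deg_quot krull /= mul1r.
apply: (@rat_the_lim_eventually_const _ _ (maxn D0 (size Y))) => d le_d.
rewrite expn0 divr1 (@hilbert_funE _ Y) //.
  by apply: leq_trans (leqW (leq_trans (leq_maxr _ _) le_d)).
by move=> g; apply: sYJ; apply: leq_trans le_d; rewrite leq_maxl.
Qed.

Lemma deg_quot_cone X x : proj_points X -> x \in X -> deg_quot (cone_ideal X) = (size X)%:R.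
Proof.
move=> pX xX; apply: (deg_quotE (y := x) (D0 := 0%N) pX pX) => // D g _ homg van y yX.
by apply/eqP; rewrite (on_line_homog_eq0 _ homg) van.
Qed.

Lemma deg_quot_add_cone X f d x : proj_points X -> f \is d.-homog -> x \in X -> ev x f = 0 ->
  deg_quot (ideal_add (cone_ideal X) f) = (card_zeros X f)%:R.
Proof.
move=> pX homf xX fx0; rewrite ideal_addE; last exact: cone_ideal_ideal.
rewrite /card_zeros -size_filter.
apply: (deg_quotE (y := x) (D0 := (d + size X)%N) pX (proj_points_filter _ pX)).
- by rewrite mem_filter fx0 eqxx.
- by move=> g Xg; exists g, 0; rewrite mul0r addr0.
- move=> g [a [h [Xa ->]]] y; rewrite mem_filter => /andP [/eqP fy0 yX].
  have /eqP onf : on_line y f == 0 by rewrite (on_line_homog_eq0 _ homf) fy0.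
  by rewrite rmorphD rmorphM Xa // onf mulr0 addr0.
move=> D g le_D homg van.
have [|h [homh hE]] := @exists_interp_form X (D - d) (fun y => ev y g / ev y f) pX.
  by apply: leqW; rewrite leq_subRL ?(leq_trans (leq_addr _ _) le_D) // addnC.
exists (g - h * f), h; split; last by rewrite subrK.
have homgh : g - h * f \is D.-homog.
  by rewrite rpredB //; have := dhomogM homh homf; rewrite subnK // (leq_trans (leq_addr _ _) le_D).
move=> y yX; apply/eqP; rewrite (on_line_homog_eq0 _ homgh) evB evM hE //.
have [fy0|fy_neq0] := eqVneq (ev y f) 0; last by rewrite divfK // subrr.
by rewrite fy0 mulr0 subr0 van // mem_filter fy0 eqxx.
Qed.

Lemma not_cone_idealE X e f : f \is e.-homog ->
  ~ cone_ideal X f <-> exists2 x, x \in X & ev x f != 0.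
Proof.
move=> homf; split => [not_cone|[x xX fx] cone_f].
  apply: NNPP => all0; apply: not_cone => x xX; apply/eqP.
  rewrite (on_line_homog_eq0 _ homf); apply/negPn/negP => fx.
  by apply: all0; exists x.
by move: fx; rewrite -(on_line_homog_eq0 _ homf) cone_f ?eqxx.
Qed.

Lemma Fd_coneE X d f : proj_points X ->
  Fd (cone_ideal X) d f <->
  [/\ f \is d.-homog, exists2 x, x \in X & ev x f != 0 & exists2 x, x \in X & ev x f = 0].
Proof.
move=> pX; split => [[homf not_cone not_colon]|[homf nz [x0 x0X fx0]]].
  split => //; first exact/(not_cone_idealE _ homf).
  apply: NNPP => no_zero; apply: not_colon => g; split => [cone_gf|cone_g] x xX; last first.
    by rewrite rmorphM cone_g ?mul0r.
  have /eqP := cone_gf x xX; rewrite rmorphM mulf_eq0 (on_line_homog_eq0 _ homf).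
  by case/orP => [/eqP //|/eqP fx0]; exfalso; apply: no_zero; exists x.
split => //; first exact/(not_cone_idealE _ homf).
have [g [homg gE]] := @exists_interp_form X (size X) (fun x => (x == x0)%:R) pX (leqnSn _).
move=> colon_eq; have /colon_eq cone_g : colon (cone_ideal X) f g.
  move=> x xX; rewrite rmorphM; apply/eqP.
  rewrite mulf_eq0 (on_line_homog_eq0 _ homg) (on_line_homog_eq0 _ homf) gE //=.
  by have [->|_] := eqVneq x x0; rewrite ?fx0 ?eqxx ?orbT.
move: (cone_g x0 x0X) => /eqP; rewrite (on_line_homog_eq0 _ homg) gE //= eqxx.
by rewrite oner_eq0.
Qed.

Lemma exists_Fd_cone X d : proj_points X -> (2 <= size X)%N -> (1 <= d)%N ->
  exists f, Fd (cone_ideal X) d f.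
Proof.
move=> pX le2X le1d; have [X_uniq X_neq0 X_sep] := pX.
have X0 : nth 0 X 0 \in X by apply: mem_nth; exact: leq_trans le2X.
have X1 : nth 0 X 1 \in X by exact: mem_nth.
have ne10 : nth 0 X 1 != nth 0 X 0 by rewrite nth_uniq //; exact: leq_trans le2X.
have [|f homf [f1 f0]] := @exists_sep_form (nth 0 X 1) [:: nth 0 X 0] d (X_neq0 _ X1) le1d.
  by move=> y; rewrite inE => /eqP ->; split; [exact: X_neq0 | exact: X_sep].
exists f; apply/Fd_coneE => //; split => //; first by exists (nth 0 X 1).
by exists (nth 0 X 0) => //; apply: f0; rewrite mem_head.
Qed.

Section MinimumDistance.
Variables (X : seq 'rV[K]_s) (d M : nat).
Hypotheses (pX : proj_points X)
  (M_attained : exists2 f, Fd (cone_ideal X) d f & card_zeros X f = M)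
  (M_max : forall f, Fd (cone_ideal X) d f -> (card_zeros X f <= M)%N).

Lemma max_zeros_lt_size : (M < size X)%N.
Proof.
have [f Ff <-] := M_attained; have [_ [x xX fx] _] := (Fd_coneE _ _ pX).1 Ff.
rewrite /card_zeros -(count_predC (fun v => ev v f == 0) X) -addn1 leq_add2l -has_count.
by apply/hasP; exists x => //=; rewrite fx.
Qed.

Lemma delta_X_max_zeros : delta_X X d = (size X - M)%N.
Proof.
rewrite /delta_X vanishing_idealE; apply: nat_minE.
  by have [f [homf not_cone _] <-] := M_attained; exists f.
move=> m [f [homf not_cone ->]]; apply: leq_sub2l.
case: (classic (exists2 x, x \in X & ev x f = 0)) => [zero|no_zero].
  by apply: M_max; apply/Fd_coneE => //; split => //; exact/(not_cone_idealE _ homf).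
suff -> : card_zeros X f = 0%N by [].
apply/eqP; rewrite -leqn0 leqNgt -has_count; apply/negP => /hasP [x xX /eqP fx0].
by apply: no_zero; exists x.
Qed.

Lemma delta_I_max_zeros : delta_I (cone_ideal X) d = (size X)%:R - M%:R.
Proof.
have [f0 Ff0 _] := M_attained.
rewrite /delta_I; case: excluded_middle_informative => [?|no_F]; last first.
  by exfalso; apply: no_F; exists f0.
have [_ [x xX _] _] := (Fd_coneE _ _ pX).1 Ff0.
rewrite (deg_quot_cone pX xX); congr (_ - _); apply: rat_maxE.
  have [f Ff <-] := M_attained; exists f; split => //.
  have [homf _ [z zX fz0]] := (Fd_coneE _ _ pX).1 Ff.
  by rewrite (deg_quot_add_cone pX homf zX fz0).
move=> b [f [Ff ->]]; have [homf _ [z zX fz0]] := (Fd_coneE _ _ pX).1 Ff.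
by rewrite (deg_quot_add_cone pX homf zX fz0) ler_nat M_max.
Qed.

End MinimumDistance.

End VanishingIdeal.

Theorem theorem4p7 (K : fieldType) (s : nat) (X : seq 'rV[K]_s) :
  proj_set X -> (2 <= size X)%N ->
  forall d : nat, (1 <= d)%N ->
    ((delta_X X d)%:R = delta_I (vanishing_ideal X) d :> rat) /\ (1 <= delta_X X d)%N.
Proof.
move=> X_proj le2X d le1d; have pX := proj_set_points X_proj.
have [f0 Ff0] := exists_Fd_cone pX le2X le1d.
pose zeros m := exists2 f, Fd (cone_ideal X) d f & card_zeros X f = m.
have zeros_f0 : zeros (card_zeros X f0) by exists f0.
have zeros_le m : zeros m -> (m <= size X)%N by move=> [f _ <-]; exact: count_size.
have [M [zeros_M zeros_le_M]] := nat_max_exists (ex_intro _ _ zeros_f0) zeros_le.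
have M_max f : Fd (cone_ideal X) d f -> (card_zeros X f <= M)%N.
  by move=> Ff; apply: zeros_le_M; exists f.
have lt_M := max_zeros_lt_size pX zeros_M.
rewrite vanishing_idealE (delta_X_max_zeros pX zeros_M M_max).
rewrite (delta_I_max_zeros pX zeros_M M_max) natrB ?(ltnW lt_M) //.
by rewrite subn_gt0.
Qed.
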